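(* Let $\mathcal{H},\mathcal{K}$ be complex Hilbert spaces with $\dim\mathcal{H}>0$, let $(f_*,f^* ):(\mathsf{P}(\mathcal{H}),\mathsf{L}(\mathcal{H}),\bar e_{\mathcal{H}})\to(\mathsf{P}(\mathcal{K}),\mathsf{L}(\mathcal{K}),\bar e_{\mathcal{K}})$ be a Chu morphism, and let $(g,\sigma)$ be a semilinear map $\mathcal{H}\to\mathcal{K}$ with $g(\psi)\ne0$ and $f_*([\psi])=[g(\psi)]$ for all nonzero $\psi\in\mathcal{H}$. If the field endomorphism $\sigma:\mathbb{C}\to\mathbb{C}$ is surjective, then $g$ is surjective.
   Context: A Chu morphism $(X,A,e)\to(X',A',e')$ between Chu spaces over $[0,1]$ (with $e:X\times A\to[0,1]$) is a pair $(f_*:X\to X',f^*:A'\to A)$ with $e(x,f^*(a'))=e'(f_*(x),a')$ for all $x,a'$. For a complex Hilbert space $\mathcal{H}$: $\mathsf{L}(\mathcal{H})$ is the set of closed subspaces, $P_S$ the orthogonal projector onto $S$, $\mathsf{P}(\mathcal{H})$ the set of rays $[\psi]=\{\lambda\psi:\lambda\in\mathbb{C}\}$, $\psi\ne0$, and $\bar e_{\mathcal{H}}([\psi],S)=\|P_S\psi\|^2/\|\psi\|^2$. A semilinear map $(g,\sigma):V_1\to V_2$ consists of a field homomorphism $\sigma:\mathbb{C}\to\mathbb{C}$ and an additive map $g$ with $g(\lambda v)=\sigma(\lambda)g(v)$. *)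

From Stdlib Require Import Rdefinitions ClassicalEpsilon.
From HB Require Import structures.
From mathcomp Require Import all_boot all_order all_algebra.
From mathcomp Require Import complex Rstruct.
Set Implicit Arguments. Unset Strict Implicit. Unset Printing Implicit Defensive.
Import Order.TTheory GRing.Theory Num.Theory.
Local Open Scope ring_scope.

Notation CC := (Rdefinitions.R[i]).

(* Convention: the inner product is linear in the first argument and
   conjugate-linear in the second; ||v||^2 = Re <v,v>. *)
Record hilbert := Hilbert {
  hcar :> lmodType CC;
  inner : hcar -> hcar -> CC;
  inner_conj : forall u v : hcar, inner u v = (inner v u)^*;
  inner_addl : forall u v w : hcar, inner (u + v) w = inner u w + inner v w;
  inner_scalel : forall (a : CC) (u v : hcar), inner (a *: u) v = a * inner u v;
  inner_ge0 : forall v : hcar, 0 <= inner v v;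
  inner_eq0 : forall v : hcar, inner v v = 0 -> v = 0;
  hcomplete : forall u : nat -> hcar,
    (forall eps : Rdefinitions.R, 0 < eps -> exists N : nat, forall m n : nat, (N <= m)%N -> (N <= n)%N ->
        complex.Re (inner (u m - u n) (u m - u n)) < eps) ->
    exists l : hcar, forall eps : Rdefinitions.R, 0 < eps -> exists N : nat, forall n : nat, (N <= n)%N ->
        complex.Re (inner (u n - l) (u n - l)) < eps
}.

Section HilbertDefs.
Variable H : hilbert.

Definition normsq (v : H) : Rdefinitions.R := complex.Re (inner v v).

Definition is_closed_subspace (S : H -> Prop) : Prop :=
  [/\ S 0,
      (forall u v, S u -> S v -> S (u + v)),
      (forall (a : CC) v, S v -> S (a *: v)) &
      (forall (u : nat -> H) (l : H), (forall n, S (u n)) ->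
         (forall eps : Rdefinitions.R, 0 < eps -> exists N : nat, forall n : nat, (N <= n)%N ->
             normsq (u n - l) < eps) -> S l)].

Definition closed_subspaces := {S : H -> Prop | is_closed_subspace S}.

(* the orthogonal projector P_S: P_S psi is the (unique, by the projection
   theorem) vector p in S with psi - p orthogonal to S *)
Definition hproj (S : closed_subspaces) (psi : H) : H :=
  epsilon (inhabits (0 : H))
    (fun p => proj1_sig S p /\ forall s, proj1_sig S s -> inner (psi - p) s = 0).

Definition hline (psi : H) : H -> Prop := fun v => exists lam : CC, v = lam *: psi.

Definition hray := {r : H -> Prop | exists psi : H, psi != 0 /\ r = hline psi}.

Definition mkray (psi : H) (hpsi : psi != 0) : hray :=
  exist _ (hline psi) (ex_intro _ psi (conj hpsi erefl)).

Definition ray_rep (r : hray) : H :=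
  epsilon (inhabits (0 : H)) (fun psi => psi != 0 /\ proj1_sig r = hline psi).

(* bar e_H([psi], S) = ||P_S psi||^2 / ||psi||^2 (independent of the representative) *)
Definition ebar (r : hray) (S : closed_subspaces) : Rdefinitions.R :=
  normsq (hproj S (ray_rep r)) / normsq (ray_rep r).

End HilbertDefs.

Definition chu_morphism (X A X' A' : Type) (e : X -> A -> Rdefinitions.R)
  (e' : X' -> A' -> Rdefinitions.R) (fs : X -> X') (fu : A' -> A) : Prop :=
  forall (x : X) (a' : A'), e x (fu a') = e' (fs x) a'.

Definition semilinear_map (H K : hilbert) (sigma : {rmorphism CC -> CC}) (g : H -> K) : Prop :=
  (forall u v : H, g (u + v) = g u + g v) /\
  (forall (lam : CC) (v : H), g (lam *: v) = sigma lam *: g v).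

(* Fix w <> 0 in K and pull the closed line [w] back along the Chu morphism to
   T = f^*[w].  If T contains some phi <> 0 then e_H([phi], T) = 1, so the Chu
   condition forces e_K([g phi], [w]) = 1, i.e. w is a multiple of g phi, and
   surjectivity of sigma puts w in the image of g.  Otherwise T = 0 and the
   same condition makes the whole image of g orthogonal to w.  That cannot
   happen both for w and for w + g psi0 (psi0 <> 0), since g psi0 is not
   orthogonal to itself. *)
From HB Require Import structures.
From mathcomp Require Import all_boot all_order all_algebra.
From mathcomp Require Import complex Rstruct.
From Stdlib Require Import ClassicalEpsilon Classical.
Import Order.TTheory GRing.Theory Num.Theory.
Local Open Scope ring_scope.
Set Implicit Arguments. Unset Strict Implicit.

Section InnerProduct.
Variable H : hilbert.
Implicit Types (u v w : H) (a : CC).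

Lemma inner_addr u v w : inner u (v + w) = inner u v + inner u w.
Proof. by rewrite inner_conj inner_addl rmorphD (inner_conj u v) (inner_conj u w). Qed.

Lemma inner_scaler a u v : inner u (a *: v) = a^* * inner u v.
Proof. by rewrite inner_conj inner_scalel rmorphM (inner_conj u v). Qed.

Lemma inner0l v : inner 0 v = 0.
Proof. by rewrite -(scale0r (0 : H)) inner_scalel mul0r. Qed.

Lemma inner0r v : inner v 0 = 0.
Proof. by rewrite inner_conj inner0l conjC0. Qed.

Lemma innerBl u v w : inner (u - v) w = inner u w - inner v w.
Proof. by rewrite inner_addl -scaleN1r inner_scalel mulN1r. Qed.

Lemma inner_self v : inner v v = (normsq v)%:C%C.
Proof. by rewrite /normsq; have := inner_ge0 v; case: (inner v v) => a b /ger0_Im /= ->. Qed.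

Lemma normsqN v : normsq (- v) = normsq v.
Proof. by rewrite /normsq -scaleN1r inner_scalel inner_scaler conjCN1 !mulN1r opprK. Qed.

Lemma normsq0 : normsq (0 : H) = 0.
Proof. by rewrite /normsq inner0l. Qed.

Lemma normsq_ge0 v : 0 <= normsq v.
Proof. by rewrite -ler0c -inner_self inner_ge0. Qed.

Lemma normsq_eq0 v : normsq v = 0 -> v = 0.
Proof. by move=> h; apply: inner_eq0; rewrite inner_self h. Qed.

Lemma normsq_neq0 v : v != 0 -> normsq v != 0.
Proof. by apply: contraNneq => /normsq_eq0 ->. Qed.

Lemma inner_self_neq0 v : v != 0 -> inner v v != 0.
Proof. by apply: contraNneq => /inner_eq0 ->. Qed.

Lemma normsqD_orth u v : inner u v = 0 -> normsq (u + v) = normsq u + normsq v.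
Proof.
move=> uv; apply: complexI; rewrite rmorphD /= -!inner_self inner_addl !inner_addr.
by rewrite uv (inner_conj v u) uv conjC0 addr0 add0r.
Qed.

End InnerProduct.

Section Projection.
Variable H : hilbert.
Implicit Types (S : closed_subspaces H) (psi p : H).

Lemma hprojE S psi p : proj1_sig S p ->
  (forall s, proj1_sig S s -> inner (psi - p) s = 0) -> hproj S psi = p.
Proof.
move=> Sp orth_p.
have [Sq orth_q] : proj1_sig S (hproj S psi) /\
    forall s, proj1_sig S s -> inner (psi - hproj S psi) s = 0.
  apply: (epsilon_spec (inhabits (0 : H)) (fun q => proj1_sig S q /\
    forall s, proj1_sig S s -> inner (psi - q) s = 0)).
  by exists p.
have [_ Sadd Sscale _] := proj2_sig S.
have Sqp : proj1_sig S (hproj S psi - p).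
  by apply: Sadd => //; rewrite -scaleN1r; apply: Sscale.
apply/eqP; rewrite -subr_eq0; apply/eqP/inner_eq0.
have split_qp : hproj S psi - p = (psi - p) - (psi - hproj S psi).
  by rewrite opprB [RHS]addrC [RHS]addrA subrK.
by rewrite {1}split_qp innerBl orth_p // orth_q // subrr.
Qed.

Lemma hproj_id S p : proj1_sig S p -> hproj S p = p.
Proof. by move=> Sp; apply: hprojE => // s _; rewrite subrr inner0l. Qed.

Lemma hproj_trivial S psi : (forall s, proj1_sig S s -> s = 0) -> hproj S psi = 0.
Proof.
have [S0 _ _ _] := proj2_sig S.
by move=> S_0; apply: hprojE => // s /S_0 ->; rewrite inner0r.
Qed.

End Projection.

Section Lines.
Variable H : hilbert.
Variables (w : H) (w_neq0 : w != 0).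

Lemma hline_refl : hline w w.
Proof. by exists 1; rewrite scale1r. Qed.

(* Closedness: the component of the limit orthogonal to w is bounded in norm by
   the distance from the limit to any point of the line. *)
Lemma hline_closed : is_closed_subspace (hline w).
Proof.
have ww := inner_self_neq0 w_neq0.
split.
- by exists 0; rewrite scale0r.
- by move=> _ _ [a ->] [b ->]; exists (a + b); rewrite scalerDl.
- by move=> a _ [b ->]; exists (a * b); rewrite scalerA.
move=> u l line_u cvg_u.
set c := inner l w / inner w w; set r := l - c *: w.
have rw : inner r w = 0 by rewrite /r innerBl inner_scalel divfK // subrr.
suff r0 : r = 0 by exists c; rewrite -[l](subrK (c *: w)) -/r r0 add0r.
apply: normsq_eq0; apply/eqP; rewrite eq_le normsq_ge0 andbT leNgt; apply/negP => r_gt0.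
have [N /(_ N (leqnn N))] := cvg_u _ r_gt0.
case: (line_u N) => lam ->.
have -> : lam *: w - l = (lam - c) *: w + - r by rewrite scalerBl opprB addrA subrK.
rewrite normsqD_orth ?normsqN; first by rewrite ltNge lerDr normsq_ge0.
by rewrite inner_scalel -scaleN1r inner_scaler inner_conj rw !(conjC0, mulr0).
Qed.

Definition line_subspace : closed_subspaces H := exist _ (hline w) hline_closed.

Lemma hproj_line chi : hproj line_subspace chi = (inner chi w / inner w w) *: w.
Proof.
have ww := inner_self_neq0 w_neq0.
apply: hprojE => [|_ [lam ->]]; first by eexists.
by rewrite inner_scaler innerBl inner_scalel divfK // subrr mulr0.
Qed.

End Lines.

Section Transition.
Variable H : hilbert.
Implicit Types (r : hray H) (S : closed_subspaces H).

Lemma ray_repP r : ray_rep r != 0 /\ proj1_sig r = hline (ray_rep r).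
Proof.
apply: (epsilon_spec (inhabits (0 : H)) (fun psi => psi != 0 /\ proj1_sig r = hline psi)).
by case: r => r [psi [psi_neq0 r_eq]]; exists psi.
Qed.

Lemma ray_rep_mem r : proj1_sig r (ray_rep r).
Proof. by have [_ ->] := ray_repP r; apply: hline_refl. Qed.

Lemma ebar_sub r S : (forall v, proj1_sig r v -> proj1_sig S v) -> ebar r S = 1.
Proof.
move=> rS; have [rep_neq0 _] := ray_repP r.
by rewrite /ebar RdivE hproj_id ?divff ?normsq_neq0 //; exact: rS (ray_rep_mem r).
Qed.

Lemma ebar_trivial r S : (forall s, proj1_sig S s -> s = 0) -> ebar r S = 0.
Proof. by move=> S_0; rewrite /ebar RdivE hproj_trivial // normsq0 mul0r. Qed.

Variables (w : H) (w_neq0 : w != 0).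

Lemma ebar_line r : let c := inner (ray_rep r) w / inner w w in
  ebar r (line_subspace w_neq0) = normsq (c *: w) / normsq (ray_rep r).
Proof. by rewrite /ebar RdivE hproj_line. Qed.

Lemma ebar_line_eq1 r : ebar r (line_subspace w_neq0) = 1 -> proj1_sig r w.
Proof.
have [rep_neq0 ->] := ray_repP r; rewrite ebar_line.
set chi := ray_rep r; set c := inner chi w / _ => /(canRL (divfK (normsq_neq0 rep_neq0))).
rewrite mul1r => norm_c.
have orth : inner (chi - c *: w) (c *: w) = 0.
  by rewrite inner_scaler innerBl inner_scalel divfK ?inner_self_neq0 // subrr mulr0.
have := normsqD_orth orth; rewrite subrK norm_c -{1}[normsq chi]add0r => /addIr/esym.
move=> /normsq_eq0/subr0_eq chi_eq.
have c_neq0 : c != 0 by apply: contraNneq rep_neq0 => c0; rewrite -/chi chi_eq c0 scale0r.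
by exists c^-1; rewrite chi_eq scalerA mulVf // scale1r.
Qed.

Lemma ebar_line_eq0 r : ebar r (line_subspace w_neq0) = 0 ->
  forall v, proj1_sig r v -> inner v w = 0.
Proof.
have [rep_neq0 ->] := ray_repP r; rewrite ebar_line.
move=> /(canRL (divfK (normsq_neq0 rep_neq0))); rewrite mul0r => /normsq_eq0/eqP.
rewrite scaler_eq0 (negbTE w_neq0) orbF mulf_eq0 invr_eq0.
rewrite (negbTE (inner_self_neq0 w_neq0)) orbF => /eqP rep_w _ [a ->].
by rewrite inner_scalel rep_w mulr0.
Qed.

End Transition.

Section Semilinear.
Variables (H K : hilbert) (sigma : {rmorphism CC -> CC}) (g : H -> K).
Hypothesis g_semilinear : semilinear_map sigma g.

Lemma semilinear0 : g 0 = 0.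
Proof. by have [_ gZ] := g_semilinear; rewrite -(scale0r (0 : H)) gZ rmorph0 scale0r. Qed.

Lemma semilinearN v : g (- v) = - g v.
Proof. by have [_ gZ] := g_semilinear; rewrite -scaleN1r gZ rmorphN1 scaleN1r. Qed.

Lemma semilinear_hline_image (sigma_surj : forall z, exists a, sigma a = z) phi v :
  hline (g phi) v -> exists u, g u = v.
Proof.
have [_ gZ] := g_semilinear; move=> [lam ->].
by have [a <-] := sigma_surj lam; exists (a *: phi); rewrite gZ.
Qed.

End Semilinear.

Section ChuSemilinear.
Variables (H K : hilbert) (fs : hray H -> hray K)
  (fu : closed_subspaces K -> closed_subspaces H).
Hypothesis fs_fu_chu : chu_morphism (@ebar H) (@ebar K) fs fu.
Variables (sigma : {rmorphism CC -> CC}) (g : H -> K).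
Hypothesis g_semilinear : semilinear_map sigma g.
Hypothesis fs_g : forall (psi : H) (psi_neq0 : psi != 0),
  proj1_sig (fs (mkray psi_neq0)) = hline (g psi).
Hypothesis sigma_surj : forall z, exists a, sigma a = z.

Lemma image_or_orthogonal (w : K) (w_neq0 : w != 0) :
  (exists v, g v = w) \/ (forall psi, inner (g psi) w = 0).
Proof.
set T := proj1_sig (fu (line_subspace w_neq0)).
have [_ _ T_scale _] := proj2_sig (fu (line_subspace w_neq0)).
case: (classic (exists phi, T phi /\ phi != 0)) => [[phi [T_phi phi_neq0]]|T_0].
  left; apply: (semilinear_hline_image g_semilinear sigma_surj (phi := phi)).
  rewrite -fs_g; apply: ebar_line_eq1; rewrite -fs_fu_chu.
  by apply: ebar_sub => _ [a ->]; apply: T_scale.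
right => psi; have [->|psi_neq0] := eqVneq psi 0.
  by rewrite (semilinear0 g_semilinear) inner0l.
apply: (ebar_line_eq0 (r := fs (mkray psi_neq0))); last by rewrite fs_g; apply: hline_refl.
rewrite -fs_fu_chu; apply: ebar_trivial => s T_s; apply/eqP/negPn/negP => s_neq0.
by apply: T_0; exists s.
Qed.

End ChuSemilinear.

Theorem proposition3p11 (H K : hilbert)
  (hdim : exists v : H, v != 0)
  (fs : hray H -> hray K) (fu : closed_subspaces K -> closed_subspaces H)
  (hchu : chu_morphism (@ebar H) (@ebar K) fs fu)
  (sigma : {rmorphism CC -> CC}) (g : H -> K)
  (hg : semilinear_map sigma g)
  (hgnz : forall psi : H, psi != 0 -> g psi != 0)
  (hfs : forall (psi : H) (hpsi : psi != 0), proj1_sig (fs (mkray hpsi)) = hline (g psi))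
  (hsigma : forall z : CC, exists w : CC, sigma w = z) :
  forall w : K, exists v : H, g v = w.
Proof.
move=> w; have [gD _] := hg; have [psi0 psi0_neq0] := hdim.
have dichotomy := image_or_orthogonal hchu hg hfs hsigma.
have [->|w_neq0] := eqVneq w 0; first by exists 0; rewrite (semilinear0 hg).
have [//|w_orth] := dichotomy w w_neq0.
have [w_eq|w'_neq0] := eqVneq (w + g psi0) 0.
  by exists (- psi0); rewrite (semilinearN hg); apply/esym/eqP; rewrite -addr_eq0 w_eq.
have [[v gv]|w'_orth] := dichotomy _ w'_neq0.
  by exists (v - psi0); rewrite gD (semilinearN hg) gv addrK.
have := w'_orth psi0; rewrite inner_addr w_orth add0r => /inner_eq0/eqP.
by rewrite (negbTE (hgnz _ psi0_neq0)).
Qed.
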